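(* Let $\mathbb{D}$ be $[0,1]^2$ or a mesh, and let $A,B:\mathbb{D}\to\mathbb{R}$ satisfy (Q1) $A\le B$ and (Q2) $L^{(A,B)}(R)\ge0$ for all $R\in\mathfrak{R}$. Suppose $\mathbf{x}\in\mathbb{D}$ satisfies $t_0=\gamma^{(A,B)}(\mathbf{x})>0$. For $0<t\le t_0$ define $A':\mathbb{D}\to\mathbb{R}$ by $A'(\mathbf{x})=A(\mathbf{x})+t$ and $A'(\mathbf{y})=A(\mathbf{y})$ for $\mathbf{y}\ne\mathbf{x}$. Then $(A',B)$ satisfies (Q1) and (Q2). Moreover, if $t=t_0$, then $\gamma^{(A',B)}(\mathbf{x})=0$.
   Context: A rectangle is $[s_1,s_2]\times[t_1,t_2]$ with $s_1<s_2$, $t_1<t_2$ and all four corners in $\mathbb{D}$; its main corners are the southwest $(s_1,t_1)$ and northeast $(s_2,t_2)$, its opposite corners the southeast $(s_2,t_1)$ and northwest $(s_1,t_2)$. $\mathfrak{R}$ is the set of finite formal unions $R=R_1\sqcup\dots\sqcup R_n$ of rectangles (repetitions allowed). The multiplicity of a point $\mathbf{y}$ is $m_R(\mathbf{y})=\sum_{i=1}^n m_{R_i}(\mathbf{y})$, where for a single rectangle $m_{R_i}(\mathbf{y})=1$ if $\mathbf{y}$ is a main corner, $-1$ if an opposite corner, $0$ otherwise. For real functions $A,B$ on $\mathbb{D}$: $L^{(A,B)}(R)=\sum_{m_R(\mathbf{y})>0}B(\mathbf{y})m_R(\mathbf{y})+\sum_{m_R(\mathbf{y})<0}A(\mathbf{y})m_R(\mathbf{y})$;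 $P_M^{(A,B)}(\mathbf{x})=\inf\{L^{(A,B)}(R)/m_R(\mathbf{x}):R\in\mathfrak{R},m_R(\mathbf{x})>0\}$; $P_O^{(A,B)}(\mathbf{x})=\inf\{L^{(A,B)}(R)/(-m_R(\mathbf{x})):R\in\mathfrak{R},m_R(\mathbf{x})<0\}$, with $\inf\emptyset=+\infty$; and $\gamma^{(A,B)}(\mathbf{x})=\min\{P_O^{(A,B)}(\mathbf{x}),B(\mathbf{x})-A(\mathbf{x})\}$. *)

From Stdlib Require Import Reals ZArith List ClassicalEpsilon.
Import ListNotations.
Open Scope R_scope.

Definition pt := (R * R)%type.

Definition pt_eq_dec (p q : pt) : {p = q} + {p <> q}.
Proof.
  destruct p as [a b], q as [c d].
  destruct (Req_EM_T a c) as [H1|H1]; destruct (Req_EM_T b d) as [H2|H2];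
  [left; subst; reflexivity | right; intros H; inversion H; contradiction
  | right; intros H; inversion H; contradiction | right; intros H; inversion H; contradiction].
Defined.

Definition unit_square (p : pt) : Prop :=
  0 <= fst p <= 1 /\ 0 <= snd p <= 1.

Definition is_mesh (D : pt -> Prop) : Prop :=
  exists xs ys : list R,
    (forall s, In s xs -> 0 <= s <= 1) /\ (forall t, In t ys -> 0 <= t <= 1) /\
    (forall p, D p <-> In (fst p) xs /\ In (snd p) ys).

Record rect := mkRect { s1 : R; s2 : R; t1 : R; t2 : R }.

Definition sw (r : rect) : pt := (s1 r, t1 r).
Definition ne (r : rect) : pt := (s2 r, t2 r).
Definition se (r : rect) : pt := (s2 r, t1 r).
Definition nw (r : rect) : pt := (s1 r, t2 r).

Definition valid_rect (D : pt -> Prop) (r : rect) : Prop :=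
  s1 r < s2 r /\ t1 r < t2 r /\
  D (sw r) /\ D (ne r) /\ D (se r) /\ D (nw r).

(* Elements of frak R: finite formal unions (lists, repetitions allowed). *)
Definition rect_union := list rect.

Definition valid_union (D : pt -> Prop) (Rs : rect_union) : Prop :=
  Forall (valid_rect D) Rs.

Definition mult_rect (r : rect) (y : pt) : Z :=
  if pt_eq_dec y (sw r) then 1%Z
  else if pt_eq_dec y (ne r) then 1%Z
  else if pt_eq_dec y (se r) then (-1)%Z
  else if pt_eq_dec y (nw r) then (-1)%Z
  else 0%Z.

Definition mult (Rs : rect_union) (y : pt) : Z :=
  fold_right (fun r acc => (mult_rect r y + acc)%Z) 0%Z Rs.

Definition corner_pts (Rs : rect_union) : list pt :=
  nodup pt_eq_dec (flat_map (fun r => [sw r; ne r; se r; nw r]) Rs).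

Definition L_AB (A B : pt -> R) (Rs : rect_union) : R :=
  fold_right
    (fun y acc =>
       let m := mult Rs y in
       (if Z_lt_dec 0 m then B y * IZR m
        else if Z_lt_dec m 0 then A y * IZR m else 0) + acc)
    0 (corner_pts Rs).

Definition Q1 (D : pt -> Prop) (A B : pt -> R) : Prop :=
  forall y, D y -> A y <= B y.

Definition Q2 (D : pt -> Prop) (A B : pt -> R) : Prop :=
  forall Rs, valid_union D Rs -> 0 <= L_AB A B Rs.

Inductive Rbar := Fin (r : R) | PInf | MInf.

Definition Rbar_le (a b : Rbar) : Prop :=
  match a, b with
  | MInf, _ => True
  | _, PInf => True
  | Fin x, Fin y => x <= y
  | _, _ => False
  end.

Definition Rbar_min (a : Rbar) (r : R) : Rbar :=
  match a with
  | PInf => Fin r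
  | MInf => MInf
  | Fin x => Fin (Rmin x r)
  end.

(* v is the infimum (in the extended reals) of S; inf of empty set = +oo. *)
Definition is_inf_Rbar (S : R -> Prop) (v : Rbar) : Prop :=
  (forall r, S r -> Rbar_le v (Fin r)) /\
  (forall w, (forall r, S r -> Rbar_le w (Fin r)) -> Rbar_le w v).

Definition P_O_set (D : pt -> Prop) (A B : pt -> R) (x : pt) (v : R) : Prop :=
  exists Rs, valid_union D Rs /\ (mult Rs x < 0)%Z /\
             v = L_AB A B Rs / (- IZR (mult Rs x)).

Definition P_O (D : pt -> Prop) (A B : pt -> R) (x : pt) : Rbar :=
  epsilon (inhabits PInf) (is_inf_Rbar (P_O_set D A B x)).

Definition gamma (D : pt -> Prop) (A B : pt -> R) (x : pt) : Rbar :=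
  Rbar_min (P_O D A B x) (B x - A x).

Definition bump (A : pt -> R) (x : pt) (t : R) : pt -> R :=
  fun y => if pt_eq_dec y x then A y + t else A y.

(* The proof rests on one identity: replacing A by A' = bump A x t changes
   L(R) only through the term of x, and only when m_R(x) < 0, namely
       L^{(A',B)}(R) = L^{(A,B)}(R) + t * m_R(x)     if m_R(x) < 0,
   and leaves it unchanged otherwise (L_AB_bump).  Consequently
   - (Q1) holds for A' because t <= gamma(x) <= B(x) - A(x);
   - (Q2) holds for A' because for m_R(x) < 0 the quotient L(R)/(-m_R(x)) is
     an element of the set defining P_O(x), hence at least gamma(x) >= t;
   - every quotient defining P_O(x) drops by exactly t, so
     P_O^{(A',B)}(x) = P_O^{(A,B)}(x) - t in the extended reals (P_O_bump),
     while B(x) - A'(x) = B(x) - A(x) - t; hence gamma drops by t, and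
     vanishes for t = gamma(x). *)

From Stdlib Require Import Reals ZArith List ClassicalEpsilon Lra Lia Classical.
Open Scope R_scope.

(* Sums over a list, written as right folds the way L_AB is defined. *)
Definition list_sum (f : pt -> R) (l : list pt) : R :=
  fold_right (fun y acc => f y + acc) 0 l.

Lemma list_sum_ext (f g : pt -> R) (l : list pt) :
  (forall y, In y l -> g y = f y) -> list_sum g l = list_sum f l.
Proof.
  induction l as [|a l IH]; intros Hfg; simpl; [reflexivity|].
  rewrite Hfg by (left; reflexivity).
  rewrite IH; [reflexivity|]. intros y Hy; apply Hfg; right; exact Hy.
Qed.

Lemma list_sum_perturb (f g : pt -> R) (x : pt) (d : R) (l : list pt) :
  NoDup l -> (forall y, y <> x -> g y = f y) -> g x = f x + d ->
  (~ In x l -> d = 0) ->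
  list_sum g l = list_sum f l + d.
Proof.
  intros Hnodup Hoff Hat Hout. induction l as [|a l IH]; simpl.
  - rewrite Hout; [lra | intros []].
  - apply NoDup_cons_iff in Hnodup as [Ha Hnodup].
    destruct (pt_eq_dec a x) as [->|Hax].
    + rewrite Hat, (list_sum_ext f g l); [lra|].
      intros y Hy; apply Hoff; intros ->; contradiction.
    + rewrite Hoff by exact Hax.
      rewrite IH; [lra | exact Hnodup |].
      intros Hn; apply Hout; intros [H|H]; [congruence | contradiction].
Qed.

Lemma mult_off_corners (Rs : rect_union) (y : pt) :
  ~ In y (corner_pts Rs) -> mult Rs y = 0%Z.
Proof.
  unfold corner_pts. rewrite nodup_In.
  induction Rs as [|r Rs IH]; intros Hy; simpl; [reflexivity|].
  rewrite IH by (intros Hn; apply Hy; simpl; tauto).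
  unfold mult_rect.
  destruct (pt_eq_dec y (sw r)); [exfalso; apply Hy; simpl; subst; tauto|].
  destruct (pt_eq_dec y (ne r)); [exfalso; apply Hy; simpl; subst; tauto|].
  destruct (pt_eq_dec y (se r)); [exfalso; apply Hy; simpl; subst; tauto|].
  destruct (pt_eq_dec y (nw r)); [exfalso; apply Hy; simpl; subst; tauto|].
  reflexivity.
Qed.

Lemma bump_at (A : pt -> R) (x : pt) (t : R) : bump A x t x = A x + t.
Proof. unfold bump. destruct (pt_eq_dec x x); [reflexivity | contradiction]. Qed.

Lemma bump_off (A : pt -> R) (x y : pt) (t : R) : y <> x -> bump A x t y = A y.
Proof. intros Hyx. unfold bump. destruct (pt_eq_dec y x); [contradiction | reflexivity]. Qed.

Lemma L_AB_bump (A B : pt -> R) (x : pt) (t : R) (Rs : rect_union) :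
  L_AB (bump A x t) B Rs = L_AB A B Rs +
    (if Z_lt_dec (mult Rs x) 0 then t * IZR (mult Rs x) else 0).
Proof.
  set (term := fun (A0 : pt -> R) (y : pt) =>
         if Z_lt_dec 0 (mult Rs y) then B y * IZR (mult Rs y)
         else if Z_lt_dec (mult Rs y) 0 then A0 y * IZR (mult Rs y) else 0).
  change (list_sum (term (bump A x t)) (corner_pts Rs) =
          list_sum (term A) (corner_pts Rs) +
          (if Z_lt_dec (mult Rs x) 0 then t * IZR (mult Rs x) else 0)).
  apply list_sum_perturb with (x := x).
  - apply NoDup_nodup.
  - intros y Hyx. unfold term. rewrite bump_off by exact Hyx. reflexivity.
  - unfold term. rewrite bump_at.
    destruct (Z_lt_dec 0 (mult Rs x)); destruct (Z_lt_dec (mult Rs x) 0); try lia; ring.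
  - intros Hx. rewrite (mult_off_corners _ _ Hx).
    destruct (Z_lt_dec 0 0); [lia | reflexivity].
Qed.

Lemma P_O_quotient_bump (A B : pt -> R) (x : pt) (t : R) (Rs : rect_union) :
  (mult Rs x < 0)%Z ->
  L_AB (bump A x t) B Rs / (- IZR (mult Rs x)) = L_AB A B Rs / (- IZR (mult Rs x)) - t.
Proof.
  intros Hm. rewrite L_AB_bump.
  destruct (Z_lt_dec (mult Rs x) 0) as [_|]; [|lia].
  assert (IZR (mult Rs x) < 0) by (apply IZR_lt; exact Hm).
  field. lra.
Qed.

Lemma P_O_set_bump (D : pt -> Prop) (A B : pt -> R) (x : pt) (t r : R) :
  P_O_set D (bump A x t) B x r <-> P_O_set D A B x (r + t).
Proof.
  split; intros [Rs [HRs [Hm Hr]]]; exists Rs; repeat split; try assumption;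
    rewrite P_O_quotient_bump in * by exact Hm; lra.
Qed.

Lemma inf_exists (S : R -> Prop) : exists v, is_inf_Rbar S v.
Proof.
  destruct (classic (exists r, S r)) as [[r0 Hr0]|Hempty].
  2:{ exists PInf; split.
      - intros r Hr; exfalso; apply Hempty; eauto.
      - intros w _; destruct w; simpl; auto. }
  destruct (classic (exists a, forall r, S r -> a <= r)) as [[a Ha]|Hunbdd].
  - (* bounded below: the infimum is minus the supremum of -S *)
    destruct (completeness (fun r => S (- r))) as [m [Hub Hleast]].
    + exists (- a). intros r Hr. specialize (Ha _ Hr). lra.
    + exists (- r0). rewrite Ropp_involutive; exact Hr0.
    + exists (Fin (- m)); split.
      * intros r Hr. simpl.
        assert (- r <= m) by (apply Hub; rewrite Ropp_involutive; exact Hr). lra.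
      * intros [b| |] Hw; simpl; auto.
        -- assert (m <= - b); [|lra].
           apply Hleast. intros r Hr. specialize (Hw _ Hr). simpl in Hw. lra.
        -- exact (Hw _ Hr0).
  - exists MInf; split.
    + intros; simpl; auto.
    + intros [b| |] Hw; simpl; auto.
      * apply Hunbdd. exists b. intros r Hr. exact (Hw _ Hr).
      * exact (Hw _ Hr0).
Qed.

Lemma P_O_is_inf (D : pt -> Prop) (A B : pt -> R) (x : pt) :
  is_inf_Rbar (P_O_set D A B x) (P_O D A B x).
Proof. unfold P_O. apply epsilon_spec, inf_exists. Qed.

Lemma Rbar_le_antisym (a b : Rbar) : Rbar_le a b -> Rbar_le b a -> a = b.
Proof. destruct a, b; simpl; intros; try contradiction; auto. f_equal; lra. Qed.

Lemma inf_unique (S : R -> Prop) (v w : Rbar) :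
  is_inf_Rbar S v -> is_inf_Rbar S w -> v = w.
Proof. intros [Hv Gv] [Hw Gw]. apply Rbar_le_antisym; auto. Qed.

Definition Rbar_shift (c : R) (v : Rbar) : Rbar :=
  match v with Fin p => Fin (p - c) | o => o end.

Lemma inf_translate (S : R -> Prop) (c : R) (v : Rbar) :
  is_inf_Rbar S v -> is_inf_Rbar (fun r => S (r + c)) (Rbar_shift c v).
Proof.
  intros [Hlow Hgreat]; split.
  - intros r Hr. specialize (Hlow _ Hr). destruct v; simpl in *; auto; lra.
  - intros w Hw.
    assert (Hw' : Rbar_le (Rbar_shift (- c) w) v).
    { apply Hgreat. intros s Hs.
      assert (Hs' : S (s - c + c)) by (replace (s - c + c) with s by ring; exact Hs).
      specialize (Hw _ Hs'). destruct w; simpl in *; auto; lra. }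
    destruct w, v; simpl in *; auto; lra.
Qed.

Lemma P_O_bump (D : pt -> Prop) (A B : pt -> R) (x : pt) (t : R) :
  P_O D (bump A x t) B x = Rbar_shift t (P_O D A B x).
Proof.
  apply (inf_unique (P_O_set D (bump A x t) B x)); [apply P_O_is_inf|].
  destruct (inf_translate _ t _ (P_O_is_inf D A B x)) as [Hlow Hgreat].
  split; intros * H.
  - apply Hlow, P_O_set_bump, H.
  - apply Hgreat. intros r Hr. apply H, P_O_set_bump, Hr.
Qed.

Lemma gamma_bounds (D : pt -> Prop) (A B : pt -> R) (x : pt) (t0 : R) :
  gamma D A B x = Fin t0 ->
  (forall r, P_O_set D A B x r -> t0 <= r) /\ t0 <= B x - A x.
Proof.
  unfold gamma. destruct (P_O_is_inf D A B x) as [Hlow _].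
  destruct (P_O D A B x) as [p| |]; simpl; intros Hg; try discriminate;
    injection Hg as <-.
  - split; [|apply Rmin_r].
    intros r Hr. specialize (Hlow _ Hr). simpl in Hlow.
    pose proof (Rmin_l p (B x - A x)). lra.
  - split; [|lra]. intros r Hr. exact (False_ind _ (Hlow _ Hr)).
Qed.

Lemma bump_Q1 (D : pt -> Prop) (A B : pt -> R) (x : pt) (t : R) :
  Q1 D A B -> t <= B x - A x -> Q1 D (bump A x t) B.
Proof.
  intros HQ1 Ht y Dy. destruct (pt_eq_dec y x) as [->|Hyx].
  - rewrite bump_at. lra.
  - rewrite bump_off by exact Hyx. apply HQ1, Dy.
Qed.

Lemma bump_Q2 (D : pt -> Prop) (A B : pt -> R) (x : pt) (t : R) :
  Q2 D A B -> (forall r, P_O_set D A B x r -> t <= r) -> Q2 D (bump A x t) B.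
Proof.
  intros HQ2 Ht Rs HRs. rewrite L_AB_bump.
  destruct (Z_lt_dec (mult Rs x) 0) as [Hm|Hm]; [|pose proof (HQ2 _ HRs); lra].
  set (k := - IZR (mult Rs x)).
  assert (Hk : 0 < k) by (unfold k; apply IZR_lt in Hm; lra).
  assert (Hq : t <= L_AB A B Rs / k) by (apply Ht; exists Rs; auto).
  apply Rmult_le_compat_r with (r := k) in Hq; [|lra].
  unfold Rdiv in Hq. rewrite Rmult_assoc, Rinv_l in Hq by lra.
  unfold k in *. lra.
Qed.

Lemma gamma_bump_to_zero (D : pt -> Prop) (A B : pt -> R) (x : pt) (t0 : R) :
  gamma D A B x = Fin t0 -> gamma D (bump A x t0) B x = Fin 0.
Proof.
  unfold gamma. rewrite P_O_bump, bump_at.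
  destruct (P_O D A B x) as [p| |]; simpl; intros Hg; try discriminate;
    injection Hg as Hg; f_equal.
  - unfold Rmin in *.
    destruct (Rle_dec p (B x - A x)); destruct (Rle_dec (p - t0) (B x - (A x + t0))); lra.
  - lra.
Qed.

Theorem mainTheorem11 :
  forall (D : pt -> Prop),
    (forall p, D p <-> unit_square p) \/ is_mesh D ->
  forall (A B : pt -> R),
    Q1 D A B -> Q2 D A B ->
  forall (x : pt), D x ->
  forall t0 : R, gamma D A B x = Fin t0 -> 0 < t0 ->
  forall t : R, 0 < t <= t0 ->
    Q1 D (bump A x t) B /\ Q2 D (bump A x t) B /\
    (t = t0 -> gamma D (bump A x t) B x = Fin 0).
Proof.
  intros D _ A B HQ1 HQ2 x _ t0 Hgamma _ t Ht.
  destruct (gamma_bounds D A B x t0 Hgamma) as [HPO HBA].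
  split; [|split].
  - apply bump_Q1; [exact HQ1 | lra].
  - apply bump_Q2; [exact HQ2|].
    intros r Hr. specialize (HPO _ Hr). lra.
  - intros ->. exact (gamma_bump_to_zero D A B x t0 Hgamma).
Qed.
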